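(* p-Commutativity fails in general: there exist a language $L$, an $L$-algebra $\mathfrak A$ with universe $A$, and elements $a,b\in A$ such that $a:b\not\approx_{\mathfrak A}b:a$.
   Context: Let $L$ be a language of algebras: a set of function symbols, each with an arity in $\mathbb N$ (constants are 0-ary function symbols). Fix a countably infinite set $X$ of variables; $T_{L,X}$ is the set of $L$-terms over $X$, and $X(s)$ denotes the set of variables occurring in a term $s$. For an $L$-algebra $\mathfrak A$ with universe $A$, every term $s$ induces a function $s^{\mathfrak A}$, evaluated at assignments of elements of $A$ to variables. An arrow of $\mathfrak A$ is a pair $(a,b)\in A\times A$, written $a\to b$. The generalizations of an arrow $a\to b$ in $\mathfrak A$ are the pairs of arbitrary terms $s\to t$ with $s,t\in T_{L,X}$ such that there is an assignment $\sigma$ of elements of $A$ to the variables in $X(s)\cup X(t)$ with $s^{\mathfrak A}(\sigma)=a$ and $t^{\mathfrak A}(\sigma)=b$; their set is denoted $\uparrow_{\mathfrak A}(a\to b)$. For $L$-algebras $\mathfrak A,\mathfrak B$, an arrow $a\to b$ of $\mathfrak A$ and an arrow $c\to d$ of $\mathfrak B$, set $(a\to b)\uparrow_{(\mathfrak A,\mathfrak B)}(c\to d):=\uparrow_{\mathfrak A}(a\to b)\cap\uparrow_{\mathfrak B}(c\to d)$. A pair of terms $s\to t$ is trivial in $(\mathfrak A,\mathfrak B)$ if it belongs to $\uparrow_{\mathfrak A}(e)$ for every arrow $e$ of $\mathfrak A$ and to $\uparrow_{\mathfrak B}(e')$ for every arrow $e'$ of $\mathfrak B$. We write $a\to b\lesssim_{(\mathfrak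 A,\mathfrak B)}c\to d$ iff either (i) every element of $\uparrow_{\mathfrak A}(a\to b)\cup\uparrow_{\mathfrak B}(c\to d)$ is trivial in $(\mathfrak A,\mathfrak B)$, or (ii) $(a\to b)\uparrow_{(\mathfrak A,\mathfrak B)}(c\to d)$ contains an element not trivial in $(\mathfrak A,\mathfrak B)$ and, for every arrow $c'\to d'$ of $\mathfrak B$, the inclusion $(a\to b)\uparrow_{(\mathfrak A,\mathfrak B)}(c\to d)\subseteq(a\to b)\uparrow_{(\mathfrak A,\mathfrak B)}(c'\to d')$ implies equality of these two sets. Define $a\to b\approx_{(\mathfrak A,\mathfrak B)}c\to d$ iff $a\to b\lesssim_{(\mathfrak A,\mathfrak B)}c\to d$ and $c\to d\lesssim_{(\mathfrak B,\mathfrak A)}a\to b$. For $a,b\in A$ and $c,d\in B$, the similarity-based analogical proportion $a:b\approx_{(\mathfrak A,\mathfrak B)}c:d$ holds iff $a\to b\approx_{(\mathfrak A,\mathfrak B)}c\to d$ and $b\to a\approx_{(\mathfrak A,\mathfrak B)}d\to c$. We write $\approx_{\mathfrak A}$ for $\approx_{(\mathfrak A,\mathfrak A)}$. *)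

From mathcomp Require Import all_boot.
Set Implicit Arguments. Unset Strict Implicit. Unset Printing Implicit Defensive.

Record language := Language { sym : Type; arity : sym -> nat }.

Inductive term (L : language) : Type :=
| Var : nat -> term L
| App : forall f : sym L, ('I_(arity f) -> term L) -> term L.

Record algebra (L : language) := Algebra {
  carrier :> Type;
  op : forall f : sym L, ('I_(arity f) -> carrier) -> carrier }.

Fixpoint eval (L : language) (A : algebra L) (sigma : nat -> A) (s : term L) : A :=
  match s with
  | Var x => sigma x
  | App f ts => @op L A f (fun i => eval sigma (ts i))
  end.

Definition gen (L : language) (A : algebra L) (a b : A) (s t : term L) : Prop :=
  exists sigma : nat -> A, eval sigma s = a /\ eval sigma t = b.

Definition cross (L : language) (A B : algebra L) (a b : A) (c d : B)
  (s t : term L) : Prop := gen a b s t /\ gen c d s t.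

Definition trivial_in (L : language) (A B : algebra L) (s t : term L) : Prop :=
  (forall e1 e2 : A, gen e1 e2 s t) /\ (forall e1 e2 : B, gen e1 e2 s t).

Definition arrow_le (L : language) (A B : algebra L) (a b : A) (c d : B) : Prop :=
  (forall s t, gen a b s t \/ gen c d s t -> trivial_in A B s t)
  \/
  ((exists s t, cross a b c d s t /\ ~ trivial_in A B s t) /\
   forall c' d' : B,
     (forall s t, cross a b c d s t -> cross a b c' d' s t) ->
     (forall s t, cross a b c' d' s t -> cross a b c d s t)).

Definition arrow_approx (L : language) (A B : algebra L) (a b : A) (c d : B) : Prop :=
  arrow_le a b c d /\ arrow_le c d a b.

Definition sim_ap (L : language) (A B : algebra L) (a b : A) (c d : B) : Prop :=
  arrow_approx a b c d /\ arrow_approx b a d c.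

(* Take a single constant c interpreted as true in the booleans. The arrow
   true -> false has the non-trivial generalization c -> x. Any common
   generalization of true -> false and false -> true must send both of its
   terms to both values, so neither term can contain c: it is a pair of
   variables, necessarily distinct, hence trivial. So true -> false is not
   below false -> true, and p-commutativity fails at (true, false). *)
From mathcomp Require Import all_boot.

Set Implicit Arguments.
Unset Strict Implicit.
Unset Printing Implicit Defensive.

Section Generalizations.

Variable L : language.

Lemma gen_Var_neq (A : algebra L) (a b : A) (x y : nat) :
  x != y -> gen a b (Var L x) (Var L y).
Proof.
move=> neq_xy; exists (fun n => if n == x then a else b) => /=.
by rewrite eqxx eq_sym (negbTE neq_xy).
Qed.

Lemma trivial_in_Var_neq (A B : algebra L) (x y : nat) :
  x != y -> trivial_in A B (Var L x) (Var L y).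
Proof. by move=> neq_xy; split=> e1 e2; apply: gen_Var_neq. Qed.

Lemma not_arrow_le (A B : algebra L) (a b : A) (c d : B) (s t : term L) :
  gen a b s t -> ~ trivial_in A B s t ->
  (forall s' t', cross a b c d s' t' -> trivial_in A B s' t') ->
  ~ arrow_le a b c d.
Proof.
move=> gen_st nontriv_st cross_triv.
case=> [all_triv | [[s' [t' [cross_st' nontriv_st']]] _]].
  exact/nontriv_st/all_triv/or_introl.
exact/nontriv_st'/cross_triv.
Qed.

End Generalizations.

Definition const_lang : language := Language (fun _ : unit => 0).

Definition const_true : algebra const_lang := @Algebra const_lang bool (fun _ _ => true).

Definition const_term : term const_lang := @App const_lang tt (fun _ => Var _ 0).

Lemma eval_const_true_false (sigma : nat -> const_true) (s : term const_lang) :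
  eval sigma s = false -> exists x, s = Var _ x.
Proof. by case: s => [x _|//]; exists x. Qed.

Lemma const_term_nontrivial :
  ~ trivial_in const_true const_true const_term (Var _ 0).
Proof. by case=> /(_ false false) [sigma []]. Qed.

Lemma cross_swap_trivial (s t : term const_lang) :
  cross (A := const_true) (B := const_true) true false false true s t ->
  trivial_in const_true const_true s t.
Proof.
move=> [[sigma1 [s1 t1]] [sigma2 [s2 t2]]].
have [x eq_s] := eval_const_true_false s2; have [y eq_t] := eval_const_true_false t1.
move: s1 t1 s2 t2; rewrite eq_s eq_t /= => s1 t1 s2 t2.
apply: trivial_in_Var_neq; apply/eqP=> eq_xy.
by move: s1; rewrite eq_xy t1.
Qed.

Theorem theorem3 :
  exists (L : language) (A : algebra L) (a b : A), ~ sim_ap (B := A) a b b a.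
Proof.
exists const_lang, const_true, true, false => -[[le_ab _] _].
apply: (not_arrow_le _ const_term_nontrivial cross_swap_trivial le_ab).
by exists (fun _ => false).
Qed.
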